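(* Let $q\geq 3$ and $n\ge 2$. The graph with vertex set $\mathcal{HGL}_n(\mathbb{F}_{q^2})$, in which $A,B$ are joined by an edge iff $\operatorname{rank}(A-B)=1$, is connected.
   Context: $\mathbb{F}_{q^2}$ is the field with $q^2$ elements with involution $\bar x=x^q$; $X^\ast=\bar X^\top$; $A$ is hermitian if $A^\ast=A$; $\mathcal{HGL}_n(\mathbb{F}_{q^2})$ is the set of invertible $n\times n$ hermitian matrices over $\mathbb{F}_{q^2}$. *)

From mathcomp Require Import all_boot all_algebra all_field.
Set Implicit Arguments. Unset Strict Implicit. Unset Printing Implicit Defensive.
Import GRing.Theory.
Local Open Scope ring_scope.

(* F plays the role of F_{q^2}; the involution is x |-> x^q. *)
Definition qbar (F : finFieldType) (q : nat) (x : F) : F := x ^+ q.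

Definition hstar (F : finFieldType) (q n : nat) (A : 'M[F]_n) : 'M[F]_n :=
  (map_mx (qbar q) A)^T.

Definition hermitian (F : finFieldType) (q n : nat) (A : 'M[F]_n) : bool :=
  hstar q A == A.

Definition HGL (F : finFieldType) (q n : nat) (A : 'M[F]_n) : bool :=
  hermitian q A && (A \in unitmx).

Definition hgl_edge (F : finFieldType) (q n : nat) : rel 'M[F]_n :=
  fun A B => [&& HGL q A, HGL q B & \rank (A - B) == 1%N].

(* Every hermitian matrix is a sum of dyads [a w w^*] with [a] real (i.e. [a^q = a]),
   and a nonzero dyad has rank one, so one would like to walk from [A] to [B] by adding
   the dyads of [B - A] one at a time.  The intermediate matrices may be singular; to
   avoid this, the dyad [M] is first added with a real weight [t] and the remaining
   weight [1 - t] is added after the other dyads.  By the matrix determinant lemma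
   [det (X + t M)] is affine in [t], so each of the two invertibility constraints on [t]
   excludes at most one value, and [q >= 3] supplies a third real value besides [0] and [1]. *)

From mathcomp Require Import all_boot all_algebra all_field zify.
(* Imported after mathcomp, so that [hermitian] is Defs.hermitian rather than the
   sesquilinear-form notion of mathcomp. *)
From Pilot Require Import Defs.

Set Implicit Arguments. Unset Strict Implicit. Unset Printing Implicit Defensive.
Import GRing.Theory.
Local Open Scope ring_scope.

Lemma exists_unit_not_root_unity (F : finFieldType) (m : nat) :
  (0 < m)%N -> (m.+1 < #|F|)%N -> exists x : F, x != 0 /\ x ^+ m != 1.
Proof.
move=> m_gt0 lt_m_F.
have [x /andP[x0 xm] | all_roots] := pickP (fun x : F => (x != 0) && (x ^+ m != 1)).
  by exists x.
have Xm1_neq0 : 'X^m - 1 != 0 :> {poly F} by rewrite -size_poly_eq0 size_XnsubC.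
have := max_poly_roots Xm1_neq0 _ (enum_uniq (predC1 (0 : F))).
rewrite size_XnsubC // -cardE cardC1.
suff -> : all (root ('X^m - 1)) (enum (predC1 (0 : F))).
  by move=> /(_ isT); rewrite ltnS -subn1 leq_subLR add1n leqNgt lt_m_F.
apply/allP => y; rewrite mem_enum inE => y0.
by move: (all_roots y); rewrite y0 /= => /negbFE; rewrite rootE !hornerE subr_eq0.
Qed.

Lemma sum_ord_pairs (V : nmodType) n (f : 'I_n -> 'I_n -> V) :
  \sum_i \sum_j f i j = \sum_i \sum_j ((f i j + f j i) *+ (i < j) + f i j *+ (i == j)).
Proof.
under [RHS]eq_bigr do rewrite big_split /= (eq_bigr _ (fun j _ => mulrnDl _ _ _)) big_split /=.
rewrite !big_split /= [X in _ + X + _]exchange_big -!big_split /=.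
apply: eq_bigr => i _; rewrite -!big_split; apply: eq_bigr => j _ /=.
by rewrite -val_eqE /=; case: ltngtP => [||/val_inj->]; rewrite ?mulr0n ?mulr1n ?addr0 ?add0r.
Qed.

Lemma det1Dmulmx (R : comUnitRingType) n (u : 'cV[R]_n) (v : 'rV[R]_n) :
  \det (1%:M + u *m v) = 1 + (v *m u) 0 0.
Proof.
pose L := block_mx 1%:M 0 v (1%:M : 'M[R]_1).
pose Rinv := block_mx 1%:M 0 (- v) (1%:M : 'M[R]_1).
have block_eq : L *m block_mx (1%:M + u *m v) u 0 1%:M *m Rinv
              = block_mx 1%:M u 0 (1%:M + v *m u).
  rewrite /L /Rinv !mulmx_block !mul1mx !mulmx1 !mul0mx !mulmx0 !add0r !addr0.
  congr block_mx; last exact: addrC.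
  - by rewrite mulmxN addrK.
  - by rewrite mulmxDr mulmxDl !mulmxN !mulmx1 !mul1mx mulmxA addrA addrK subrr.
have := congr1 determinant block_eq.
rewrite !det_mulmx /L /Rinv !(det_lblock, det_ublock) !det1 !mul1r !mulr1 => ->.
by rewrite det_mx11 !mxE.
Qed.

Lemma det_addmx_scale_rank1 (R : comUnitRingType) n (X : 'M[R]_n) (u : 'cV_n) (v : 'rV_n) t :
  X \in unitmx -> \det (X + t *: (u *m v)) = \det X * (1 + t * (v *m invmx X *m u) 0 0).
Proof.
move=> uX; have -> : X + t *: (u *m v) = X *m (1%:M + (t *: invmx X *m u) *m v).
  by rewrite mulmxDr mulmx1 -!scalemxAl -scalemxAr !mulmxA mulmxV // mul1mx.
by rewrite det_mulmx det1Dmulmx -scalemxAl -scalemxAr mxE mulmxA.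
Qed.

Section Conjugation.
Variables (F : finFieldType) (q : nat).
Hypothesis cardF : #|F| = (q ^ 2)%N.

Lemma q_gt0 : (0 < q)%N.
Proof. by rewrite -(ltn_exp2r 0 _ (isT : 0 < 2)%N) exp0n // -cardF; apply/card_gt0P; exists 0. Qed.

Lemma pchar_nat_q : [pchar F].-nat q.
Proof.
have [p p_pr pcharFp] := finPcharP F.
have p_nat_q : p.-nat q.
  apply: (@pnat_dvd _ (q ^ 2)); first exact: dvdn_exp.
  by rewrite -cardF (card_pprimeChar pcharFp) pnatX pnat_id ?orbT.
by apply: sub_in_pnat p_nat_q => r _; rewrite inE => /eqP ->.
Qed.

Lemma qbarD (x y : F) : qbar q (x + y) = qbar q x + qbar q y.
Proof. exact: exprDn_pchar pchar_nat_q. Qed.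

Lemma qbar0 : qbar q (0 : F) = 0.
Proof. by rewrite /qbar expr0n eqn0Ngt q_gt0. Qed.

Lemma qbar1 : qbar q (1 : F) = 1.
Proof. exact: expr1n. Qed.

Lemma qbarN (x : F) : qbar q (- x) = - qbar q x.
Proof. by apply/eqP; rewrite -subr_eq0 opprK -qbarD addNr qbar0. Qed.

Lemma qbarM (x y : F) : qbar q (x * y) = qbar q x * qbar q y.
Proof. exact: exprMn. Qed.

Lemma qbarK : involutive (@qbar F q).
Proof. by move=> x; rewrite /qbar -exprM -(expnSr q 1) -cardF expf_card. Qed.

Lemma exists_real_neq01 : (3 <= q)%N -> exists r : F, [/\ qbar q r = r, r != 0 & r != 1].
Proof.
move=> q_ge3; have [|x [x_neq0 Nx_neq1]] := @exists_unit_not_root_unity F q.+1 isT.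
  by rewrite cardF; nia.
exists (x ^+ q.+1); split; rewrite ?expf_neq0 //.
by rewrite /qbar -exprM mulSn exprD -(expnSr q 1) -cardF expf_card exprS mulrC.
Qed.

Section Dyads.
Variable n : nat.

Definition cstar (w : 'cV[F]_n) : 'rV[F]_n := (map_mx (qbar q) w)^T.

Definition hdyad (M : 'M[F]_n) :=
  exists a w, qbar q a = a /\ M = a *: (w *m cstar w).

Definition hdyad_sum (H : 'M[F]_n) :=
  exists Ms : seq 'M_n, {in Ms, forall M, hdyad M} /\ H = \sum_(M <- Ms) M.

Lemma hermitianP (A : 'M[F]_n) :
  reflect (forall i j, qbar q (A j i) = A i j) (hermitian q A).
Proof.
apply: (iffP eqP) => [hA i j | hA]; first by rewrite -{2}hA /hstar !mxE.
by apply/matrixP => i j; rewrite /hstar !mxE.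
Qed.

Lemma hermitianD (A B : 'M[F]_n) :
  hermitian q A -> hermitian q B -> hermitian q (A + B).
Proof.
by move=> /hermitianP hA /hermitianP hB; apply/hermitianP => i j; rewrite !mxE qbarD ?hA ?hB.
Qed.

Lemma hermitianN (A : 'M[F]_n) : hermitian q A -> hermitian q (- A).
Proof. by move=> /hermitianP hA; apply/hermitianP => i j; rewrite !mxE qbarN ?hA. Qed.

Lemma cstarD (u v : 'cV[F]_n) : cstar (u + v) = cstar u + cstar v.
Proof. by apply/matrixP => r s; rewrite !mxE qbarD. Qed.

Lemma cstarZ a (u : 'cV[F]_n) : cstar (a *: u) = qbar q a *: cstar u.
Proof. by apply/matrixP => r s; rewrite !mxE qbarM. Qed.

Lemma cstar_delta (i : 'I_n) : cstar (delta_mx i 0) = delta_mx 0 i.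
Proof. by apply/matrixP => r s; rewrite !mxE andbC; case: (_ && _); rewrite ?qbar0 ?qbar1. Qed.

Lemma hdyad_hermitian (M : 'M[F]_n) : hdyad M -> hermitian q M.
Proof.
move=> [a [w [ha ->]]]; apply/hermitianP => i j.
by rewrite !mxE !big_ord1 !mxE !qbarM ha qbarK [qbar q _ * _]mulrC.
Qed.

Lemma hdyadZ t (M : 'M[F]_n) : qbar q t = t -> hdyad M -> hdyad (t *: M).
Proof. by move=> ht [a [w [ha ->]]]; exists (t * a), w; rewrite qbarM ht ha scalerA. Qed.

Lemma rank_hdyad (M : 'M[F]_n) : hdyad M -> M != 0 -> \rank M = 1%N.
Proof.
move=> [a [w [_ defM]]] M_neq0; apply/eqP; rewrite eqn_leq lt0n mxrank_eq0 M_neq0 andbT defM.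
apply: leq_trans (mxrank_scale _ _) _; apply: leq_trans (mxrankM_maxl _ _) _.
exact: rank_leq_col.
Qed.

Lemma hdyad_sum0 : hdyad_sum 0.
Proof. by exists [::]; rewrite big_nil. Qed.

Lemma hdyad_sumD (H1 H2 : 'M[F]_n) : hdyad_sum H1 -> hdyad_sum H2 -> hdyad_sum (H1 + H2).
Proof.
move=> [Ms1 [dMs1 ->]] [Ms2 [dMs2 ->]]; exists (Ms1 ++ Ms2); rewrite big_cat.
by split=> // M; rewrite mem_cat => /orP[/dMs1|/dMs2].
Qed.

Lemma hdyad_sumMn (H : 'M[F]_n) k : hdyad_sum H -> hdyad_sum (H *+ k).
Proof.
by move=> dH; elim: k => [|k IHk]; rewrite ?mulrS; [apply: hdyad_sum0 | apply: hdyad_sumD].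
Qed.

Lemma hdyad_sum_hdyad (M : 'M[F]_n) : hdyad M -> hdyad_sum M.
Proof. by move=> dM; exists [:: M]; rewrite big_seq1; split=> // M'; rewrite inE => /eqP->. Qed.

Lemma hdyad_sum_diag a (i : 'I_n) : qbar q a = a -> hdyad_sum (a *: delta_mx i i).
Proof.
by move=> ha; apply: hdyad_sum_hdyad; exists a, (delta_mx i 0); rewrite cstar_delta mul_delta_mx.
Qed.

(* [h E_ij + conj h E_ji] is [w w^*] minus two diagonal dyads, where [w = e_i + conj h e_j]. *)
Lemma hdyad_sum_offdiag h (i j : 'I_n) :
  hdyad_sum (h *: delta_mx i j + qbar q h *: delta_mx j i).
Proof.
set c := qbar q h; pose w := delta_mx i 0 + c *: delta_mx j 0 : 'cV[F]_n.
have ww : w *m cstar w = delta_mx i i + h *: delta_mx i j + c *: delta_mx j i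
                         + (c * h) *: delta_mx j j.
  rewrite /w cstarD cstarZ !cstar_delta /c qbarK mulmxDl !mulmxDr.
  by rewrite -!scalemxAl -!scalemxAr !mul_delta_mx scalerA !addrA.
have -> : h *: delta_mx i j + c *: delta_mx j i =
          w *m cstar w - delta_mx i i - (c * h) *: delta_mx j j.
  by rewrite ww addrAC addrK -addrA addrC addrA subrK addrC.
have real_Nh : qbar q (c * h) = c * h by rewrite qbarM qbarK mulrC.
rewrite -[w *m _]scale1r -scaleN1r -scaleNr.
apply: hdyad_sumD; first apply: hdyad_sumD.
- by apply: hdyad_sum_hdyad; exists 1, w; rewrite qbar1.
- by apply: hdyad_sum_diag; rewrite qbarN qbar1.
- by apply: hdyad_sum_diag; rewrite qbarN real_Nh.
Qed.

Lemma hermitian_hdyad_sum (H : 'M[F]_n) : hermitian q H -> hdyad_sum H.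
Proof.
move=> /hermitianP hH; rewrite [H]matrix_sum_delta sum_ord_pairs.
apply: big_ind => [|? ?|i _]; [exact: hdyad_sum0 | exact: hdyad_sumD |].
apply: big_ind => [|? ?|j _]; [exact: hdyad_sum0 | exact: hdyad_sumD |].
apply: hdyad_sumD; first by apply: hdyad_sumMn; rewrite -(hH j i); apply: hdyad_sum_offdiag.
have [<-|_] := eqVneq i j; last exact: hdyad_sum0.
by apply: hdyad_sum_diag; apply: hH.
Qed.

Lemma connect_hgl_hdyad (X M : 'M[F]_n) :
  HGL q X -> HGL q (X + M) -> hdyad M -> connect (@hgl_edge F q n) X (X + M).
Proof.
move=> hX hXM dM; have [->|M_neq0] := eqVneq M 0; first by rewrite addr0 connect0.
by apply: connect1; rewrite /hgl_edge hX hXM opprD addNKr mxrank_opp rank_hdyad.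
Qed.

Lemma exists_real_avoid_affine (c c' : F) : (3 <= q)%N ->
  exists t, [/\ qbar q t = t, 1 + t * c != 0 & 1 + (t - 1) * c' != 0].
Proof.
move=> q_ge3; have [c'_eq1|c'_neq1] := eqVneq c' 1; last first.
  by exists 0; split; rewrite ?qbar0 ?mul0r ?addr0 ?oner_neq0 // sub0r mulN1r subr_eq0 eq_sym.
have [c_eqN1|c_neqN1] := eqVneq c (-1); last first.
  exists 1; split; rewrite ?qbar1 ?subrr ?mul0r ?addr0 ?oner_neq0 //.
  by rewrite mul1r addrC addr_eq0.
have [r [rr r_neq0 r_neq1]] := exists_real_neq01 q_ge3.
exists r; split; rewrite // ?c_eqN1 ?c'_eq1.
  by rewrite mulrN1 subr_eq0 eq_sym.
by rewrite mulr1 addrC subrK.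
Qed.

Lemma exists_real_unit_shift (X Z M : 'M[F]_n) : (3 <= q)%N ->
  X \in unitmx -> Z + M \in unitmx -> hdyad M ->
  exists t, [/\ qbar q t = t, X + t *: M \in unitmx & Z + t *: M \in unitmx].
Proof.
move=> q_ge3 uX uZM [a [w [_ defM]]].
have defZ t : Z + t *: M = Z + M + (t - 1) *: M.
  by rewrite -addrA -[X in _ + (X + _)]scale1r -scalerDl [1 + _]addrC subrK.
have [t [rt ct c't]] := exists_real_avoid_affine
  ((cstar w *m invmx X *m (a *: w)) 0 0) ((cstar w *m invmx (Z + M) *m (a *: w)) 0 0) q_ge3.
move: uX uZM; rewrite !unitmxE !unitfE => detX detZM.
exists t; split=> //; rewrite ?defZ unitmxE unitfE.
- by rewrite defM scalemxAl det_addmx_scale_rank1 ?mulf_neq0 // unitmxE unitfE.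
- by rewrite {2}defM scalemxAl det_addmx_scale_rank1 ?mulf_neq0 // unitmxE unitfE.
Qed.

Lemma connect_hgl_hdyad_sum (H X : 'M[F]_n) : (3 <= q)%N ->
  hdyad_sum H -> HGL q X -> HGL q (X + H) -> connect (@hgl_edge F q n) X (X + H).
Proof.
move=> q_ge3 [Ms [dMs ->]]; elim: Ms dMs X => [|M Ms IHMs] dMs X hX.
  by rewrite big_nil addr0 connect0.
rewrite big_cons; set S := \sum_(M' <- Ms) M'; rewrite [M + S]addrC addrA => hY.
have dM : hdyad M by apply: dMs; rewrite mem_head.
have {}dMs : {in Ms, forall M, hdyad M} by move=> M' M'_Ms; apply: dMs; rewrite inE M'_Ms orbT.
have [t [rt uX' uY']] := exists_real_unit_shift q_ge3 (andP hX).2 (andP hY).2 dM.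
have rt' : qbar q (1 - t) = 1 - t by rewrite qbarD qbarN qbar1 rt.
have herm_M t' : qbar q t' = t' -> hermitian q (t' *: M).
  by move=> rt''; apply/hdyad_hermitian/hdyadZ.
have herm_XS : hermitian q (X + S).
  rewrite -(addrK M (X + S)) hermitianD ?hermitianN ?(andP hY).1 //.
  by rewrite -[M]scale1r herm_M ?qbar1.
have hX' : HGL q (X + t *: M) by rewrite /HGL uX' hermitianD ?(andP hX).1 ?herm_M.
have hY' : HGL q (X + t *: M + S) by rewrite addrAC /HGL uY' hermitianD ?herm_M.
apply: connect_trans (connect_hgl_hdyad hX hX' (hdyadZ rt dM)) _.
apply: connect_trans (IHMs dMs _ hX' hY') _.
have defXSM : X + S + t *: M + (1 - t) *: M = X + S + M.
  by rewrite -addrA -scalerDl [t + _]addrC subrK scale1r.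
rewrite -/S [X + t *: M + S]addrAC -defXSM.
by apply: connect_hgl_hdyad; [rewrite addrAC | rewrite defXSM | exact: hdyadZ rt' dM].
Qed.

End Dyads.

End Conjugation.

Theorem lemma2p5 (F : finFieldType) (q n : nat) :
  #|F| = (q ^ 2)%N -> (3 <= q)%N -> (2 <= n)%N ->
  forall A B : 'M[F]_n, HGL q A -> HGL q B -> connect (@hgl_edge F q n) A B.
Proof.
move=> cardF q_ge3 _ A B hA hB.
have hBA : hermitian q (B - A) by rewrite hermitianD ?hermitianN ?(andP hA).1 ?(andP hB).1.
have defB : B = A + (B - A) by rewrite addrC subrK.
rewrite defB; apply: (connect_hgl_hdyad_sum cardF q_ge3 (hermitian_hdyad_sum cardF hBA)) => //.
by rewrite -defB.
Qed.
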